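(* Let $\mathbf{R}$ be a real $n\times M$ matrix and $\mathbf{F}$ a real $m\times M$ matrix with $m\ge M>n$, and suppose $\mathbf{F}$ has full column rank $M$. Then $$\|\mathbf{A}_s\|=\|(\mathbf{F}\mathbf{R}^{+})^{+}\|\le\|\mathbf{R}\mathbf{F}^{+}\|=\|\mathbf{A}_p\|,$$ where $\|\mathbf{Y}\|=\sqrt{\operatorname{Tr}(\mathbf{Y}^{*}\mathbf{Y})}$ is the Hilbert–Schmidt (Frobenius) norm. Consequently, the mean square reconstruction errors due to data noise satisfy $e_s\le e_p$.
   Context: For a matrix $\mathbf{X}$, $\mathbf{X}^{+}$ denotes its Moore–Penrose pseudoinverse. The columns of $\mathbf{R}$ are $M$ known probe parameter vectors in $\mathbb{R}^n$, and the columns of $\mathbf{F}$ are the corresponding measured patterns in $\mathbb{R}^m$. The standard-tomography reconstruction matrix is $\mathbf{A}_s=(\mathbf{F}\mathbf{R}^{+})^{+}$, and the data-pattern reconstruction matrix is $\mathbf{A}_p=\mathbf{R}\mathbf{F}^{+}$. For $\alpha\in\{s,p\}$, the mean square error is $e_\alpha^2=\overline{\|\mathbf{A}_\alpha\Delta\mathbf{p}\|^2}$, where the bar denotes the average over data-noise vectors $\Delta\mathbf{p}\in\mathbb{R}^m$ of fixed Euclidean norm $\epsilon$, uniformly distributed in direction. This average equals $\epsilon^2\|\mathbf{A}_\alpha\|^2/m$. *)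

From HB Require Import structures.
From mathcomp Require Import all_boot all_order all_algebra.
Set Implicit Arguments. Unset Strict Implicit. Unset Printing Implicit Defensive.
Import Order.TTheory GRing.Theory Num.Theory.
Local Open Scope ring_scope.

(* X is the Moore-Penrose pseudoinverse of A (real matrices: adjoint = transpose):
   the four Penrose conditions, which determine X uniquely. *)
Definition is_pinv (R : rcfType) (p q : nat) (A : 'M[R]_(p, q)) (X : 'M[R]_(q, p)) : Prop :=
  [/\ A *m X *m A = A, X *m A *m X = X, (A *m X)^T = A *m X & (X *m A)^T = X *m A].

Definition hs_norm (R : rcfType) (p q : nat) (Y : 'M[R]_(p, q)) : R :=
  Num.sqrt (\tr (Y^T *m Y)).

(* Root mean square reconstruction error e_alpha for data noise of norm eps in R^m:
   e_alpha^2 = eps^2 ||A_alpha||^2 / m. *)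
Definition rms_error (R : rcfType) (p q : nat) (eps : R) (A : 'M[R]_(p, q)) : R :=
  Num.sqrt (eps ^+ 2 * hs_norm A ^+ 2 / q%:R).

From HB Require Import structures.
From mathcomp Require Import all_boot all_order all_algebra.
Import Order.TTheory GRing.Theory Num.Theory.
Local Open Scope ring_scope.

(* Since F has full column rank, F^+ F = 1, so with B := F R^+ both A_p B and
   A_s B equal the orthogonal projector R R^+.  Among all Z with Z B = A_s B,
   the pseudoinverse A_s = B^+ has the least Hilbert-Schmidt norm: Z - A_s
   kills B, hence is orthogonal to A_s, whose rows lie in the range of B^T,
   and Pythagoras applies. *)

Section HilbertSchmidt.

Context {K : rcfType} {p q : nat}.
Implicit Types A Y Z : 'M[K]_(p, q).

Lemma mxtrace_tr_mul_ge0 Y : 0 <= \tr (Y^T *m Y).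
Proof.
apply: sumr_ge0 => i _; rewrite mxE.
by apply: sumr_ge0 => k _; rewrite mxE -expr2 sqr_ge0.
Qed.

Lemma mxtrace_tr_mul_addr_orth A Y : Y *m A^T = 0 ->
  \tr ((A + Y)^T *m (A + Y)) = \tr (A^T *m A) + \tr (Y^T *m Y).
Proof.
move=> YA; have tAY : \tr (A^T *m Y) = 0 by rewrite mxtrace_mulC YA mxtrace0.
have tYA : \tr (Y^T *m A) = 0 by rewrite -mxtrace_tr trmx_mul trmxK.
rewrite [(A + Y)^T]linearD /= mulmxDl !mulmxDr !mxtraceD tAY tYA.
by rewrite addr0 add0r.
Qed.

Lemma hs_norm_le_addr_orth A Y : Y *m A^T = 0 -> hs_norm A <= hs_norm (A + Y).
Proof.
move=> YA; rewrite /hs_norm ler_wsqrtr // mxtrace_tr_mul_addr_orth //.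
by rewrite lerDl mxtrace_tr_mul_ge0.
Qed.

Lemma ler_rms_error eps A Z : hs_norm A <= hs_norm Z ->
  rms_error eps A <= rms_error eps Z.
Proof.
move=> le_AZ; rewrite /rms_error ler_wsqrtr // ler_wpM2r ?invr_ge0 ?ler0n //.
by rewrite ler_wpM2l ?sqr_ge0 // lerXn2r // nnegrE sqrtr_ge0.
Qed.

End HilbertSchmidt.

Section PseudoInverse.

Context {K : rcfType} {p q : nat}.

Lemma pinv_mulmx_full_col_rank {A : 'M[K]_(p, q)} {X : 'M[K]_(q, p)} :
  \rank A = q -> is_pinv A X -> X *m A = 1%:M.
Proof.
move=> rkA [AXA XAX _ _]; set P := X *m A.
have PP : P *m P = P by rewrite mulmxA XAX.
have rkP : \rank P = q.
  by apply/eqP; rewrite eqn_leq rank_leq_col -{1}rkA -{1}AXA -mulmxA mxrankM_maxr.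
have uP : P \in unitmx by rewrite -row_free_unit /row_free rkP.
by rewrite -[P]mul1mx -(mulVmx uP) -mulmxA PP.
Qed.

Lemma trmx_pinv {B : 'M[K]_(p, q)} {X : 'M[K]_(q, p)} :
  is_pinv B X -> X^T = B *m X *m X^T.
Proof.
case=> _ XBX BXsym _.
have X_BX : X = X *m (B *m X)^T by rewrite BXsym mulmxA XBX.
by rewrite {1}X_BX trmx_mul trmxK.
Qed.

Lemma pinv_min_hs_norm {B : 'M[K]_(p, q)} {X Z : 'M[K]_(q, p)} :
  is_pinv B X -> Z *m B = X *m B -> hs_norm X <= hs_norm Z.
Proof.
move=> BX ZB; have YB : (Z - X) *m B = 0 by rewrite mulmxBl ZB subrr.
have YX : (Z - X) *m X^T = 0 by rewrite (trmx_pinv BX) !mulmxA YB !mul0mx.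
by rewrite -(subrKC X Z) hs_norm_le_addr_orth.
Qed.

End PseudoInverse.

Lemma pinv_mulmx_left_invertible {K : rcfType} {n M m : nat}
    {Rm : 'M[K]_(n, M)} {Rp : 'M[K]_(M, n)} {Fm : 'M[K]_(m, M)}
    {Fp : 'M[K]_(M, m)} {X : 'M[K]_(n, m)} :
  Fp *m Fm = 1%:M -> is_pinv Rm Rp -> is_pinv (Fm *m Rp) X ->
  X *m (Fm *m Rp) = Rm *m Rp.
Proof.
move=> FpF [_ RpRRp RRsym _] BX; case: (BX) => BXB _ _ XBsym.
set B := Fm *m Rp in BX BXB XBsym *; set Q := Rm *m Rp.
have FpB : Fp *m B = Rp by rewrite mulmxA FpF mul1mx.
have BQ : B *m Q = B by rewrite -mulmxA [Rp *m _]mulmxA RpRRp.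
have XB_Q : X *m B = X *m B *m Q by rewrite -mulmxA BQ.
have XB_QXB : X *m B = Q *m (X *m B).
  by have := congr1 trmx XB_Q; rewrite XBsym trmx_mul XBsym RRsym.
have Q_QXB : Q = Q *m (X *m B).
  by rewrite /Q -FpB -{1}BXB !mulmxA.
by rewrite XB_QXB -Q_QXB.
Qed.

Theorem mainTheorem2 (K : rcfType) (n M m : nat)
  (Rm : 'M[K]_(n, M)) (Fm : 'M[K]_(m, M))
  (Rp : 'M[K]_(M, n)) (Fp : 'M[K]_(M, m)) (As : 'M[K]_(n, m)) :
  (n < M)%N -> (M <= m)%N -> \rank Fm = M ->
  is_pinv Rm Rp -> is_pinv Fm Fp -> is_pinv (Fm *m Rp) As ->
  hs_norm As <= hs_norm (Rm *m Fp) /\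
  (forall eps : K, 0 <= eps -> rms_error eps As <= rms_error eps (Rm *m Fp)).
Proof.
move=> _ _ rkF RRp FFp BAs.
have FpF := pinv_mulmx_full_col_rank rkF FFp.
have ApB_AsB : Rm *m Fp *m (Fm *m Rp) = As *m (Fm *m Rp).
  rewrite (pinv_mulmx_left_invertible FpF RRp BAs).
  by rewrite mulmxA -[Rm *m Fp *m Fm]mulmxA FpF mulmx1.
have hs_le := pinv_min_hs_norm BAs ApB_AsB.
by split=> // eps _; apply: ler_rms_error.
Qed.
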